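(* Let $f\in C^1([0,1],\mathbb{R})$ satisfy $f(0)=f(1)=0$, $f(s)>0$ for all $s\in(0,1)$, $f'(1)<0$, and suppose there exist $s_0\in(0,1)$, $K\ge 0$, $\alpha>0$ and $r>0$ such that $f(s)\le r\frac{s}{(1+|\ln s|)^\alpha}$ for all $s\in(0,1)$ and $f(s)\ge r\frac{s}{(1+|\ln s|)^\alpha}(1-Ks)$ for all $s\in(0,s_0]$. Let $u_0:\mathbb{R}\to[0,1]$ be uniformly continuous with $u_0>0$ on $\mathbb{R}$, $\liminf_{x\to-\infty}u_0>0$, $\lim_{x\to+\infty}u_0=0$, of class $C^2$ and nonincreasing on $[\xi_0,+\infty)$ for some $\xi_0>0$, and such that $\varphi_0:=-\ln u_0$ satisfies $\varphi_0'=o(\varphi_0^{-\alpha})$ and $\varphi_0''=o(\varphi_0')$ as $x\to+\infty$. Fix $\varepsilon>0$, let $\rho:=r+\frac{\varepsilon}{2}$, and define $$w(t,x):=\exp\Big\{1-\big[(1+\varphi_0(x))^{\alpha+1}-\rho(\alpha+1)t\big]^{\frac{1}{\alpha+1}}\Big\},\qquad x_0(t):=\sup\Big\{x: u_0(x)=\exp\big(1-(\rho(\alpha+1)t+1)^{\frac{1}{\alpha+1}}\big)\Big\}.$$ Let $t^\#>0$ be a time such that $|w_{xx}(t,x)|<\frac{\varepsilon}{2}\frac{w(t,x)}{(1-\ln w(t,x))^\alpha}$ for all $x\ge x_0(t)$, $t\ge t^\#$ (such a time exists). Define $m(t,x):=w(t+t^\#,x)$ for $x\ge x_0(t+t^\#)$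 and $m(t,x):=1$ for $x<x_0(t+t^\#)$. Then $m$ is a supersolution of $u_t=u_{xx}+f(u)$ for all $t>0$ and $x\in\mathbb{R}$, i.e. $m_t-m_{xx}-f(m)\ge0$ on each of the regions $\{x<x_0(t+t^\#)\}$ and $\{x\ge x_0(t+t^\#)\}$.
   Context: $0<m\le 1$; $w$ solves $w_t=\rho\,w/(1-\ln w)^\alpha$ with $w(0,\cdot)=u_0$ and $w(t,x_0(t))=1$. *)

From Stdlib Require Import Reals.
From Coquelicot Require Import Coquelicot.
Open Scope R_scope.

Definition deriv_within (D : R -> Prop) (f : R -> R) (x l : R) : Prop :=
  filterlim (fun h => (f (x + h) - f x) / h)
    (within (fun h => h <> 0 /\ D (x + h)) (locally 0)) (locally l).

Definition cont_within (D : R -> Prop) (f : R -> R) (x : R) : Prop :=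
  filterlim f (within D (locally x)) (locally (f x)).

(* f is C^1 on D with derivative f' (one-sided at boundary points of D) *)
Definition C1_on (D : R -> Prop) (f f' : R -> R) : Prop :=
  forall x, D x -> deriv_within D f x (f' x) /\ cont_within D f' x.

Definition C2_on (D : R -> Prop) (f f' f'' : R -> R) : Prop :=
  C1_on D f f' /\ C1_on D f' f''.

Definition unif_cont (u : R -> R) : Prop :=
  forall e, 0 < e -> exists d, 0 < d /\
    forall x y, Rabs (x - y) < d -> Rabs (u x - u y) < e.

Definition phi0 (u0 : R -> R) (x : R) : R := - ln (u0 x).

Definition wfun (u0 : R -> R) (alpha rho : R) (t x : R) : R :=
  exp (1 - Rpower (Rpower (1 + phi0 u0 x) (alpha + 1) - rho * (alpha + 1) * t)
                  (1 / (alpha + 1))).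

(* x_0(t) = sup { x | u0 x = exp(1 - (rho(alpha+1)t + 1)^(1/(alpha+1))) },
   as an extended real (sup of the empty set is -oo) *)
Definition x0fun (u0 : R -> R) (alpha rho : R) (t : R) : Rbar :=
  Lub_Rbar (fun x => u0 x = exp (1 - Rpower (rho * (alpha + 1) * t + 1) (1 / (alpha + 1)))).

(* On the region where m = 1 the inequality is f(1) = 0.  Beyond x_0(t) the
   level exp(1 - (rho (alpha+1) t + 1)^(1/(alpha+1))) is never attained again,
   so, u_0 being continuous and tending to 0 at +oo, u_0 stays below it there.
   This makes the bracket inside w at least 1, hence 0 < w <= 1 and
   1 - ln w = 1 + |ln w|.  Now w solves w_t = rho w / (1 - ln w)^alpha, the upper
   bound on f gives f(w) <= r w / (1 - ln w)^alpha and the choice of t# gives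
   |w_xx| < (eps/2) w / (1 - ln w)^alpha; as rho = r + eps/2, these balance. *)

From Stdlib Require Import Reals Lra.
From Coquelicot Require Import Coquelicot.
Open Scope R_scope.

Lemma continuity_of_unif_cont (u : R -> R) : unif_cont u -> continuity u.
Proof.
intros Hu x. apply continuity_pt_filterlim.
intros P [e He].
destruct (Hu e (cond_pos e)) as [d [Hd Hud]].
exists (mkposreal d Hd). intros y Hy. apply He.
exact (Hud y x Hy).
Qed.

Lemma le_level_of_Lub_level_set_le (u : R -> R) (L x : R) :
  continuity u -> is_lim u p_infty 0 -> 0 < L ->
  Rbar_le (Lub_Rbar (fun y => u y = L)) x -> u x <= L.
Proof.
intros Hu Hlim HL Hx.
destruct (Rle_lt_dec (u x) L) as [Hle | Hgt]; [exact Hle | exfalso].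
destruct (Hlim (ball 0 L)) as [M HM]. { exists (mkposreal L HL). auto. }
set (z := Rmax (M + 1) (x + 1)).
assert (Hxz : x < z) by (unfold z; pose proof (Rmax_r (M + 1) (x + 1)); lra).
assert (Hz : u z < L).
{ assert (Hball : Rabs (u z - 0) < L).
  { apply (HM z). unfold z. pose proof (Rmax_l (M + 1) (x + 1)). lra. }
  rewrite Rminus_0_r in Hball. pose proof (Rle_abs (u z)). lra. }
destruct (IVT_gen u x z L Hu) as [y [Hy Huy]].
{ rewrite Rmin_right, Rmax_left; lra. }
rewrite Rmin_left, Rmax_right in Hy by lra.
assert (Hxy : x < y) by (destruct (Req_dec x y) as [<- | ]; lra).
assert (Hy_le : Rbar_le y (Lub_Rbar (fun y => u y = L))).
{ apply (proj1 (Lub_Rbar_correct _)). exact Huy. }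
pose proof (Rbar_le_trans _ _ _ Hy_le Hx) as Hyx. simpl in Hyx. lra.
Qed.

Lemma Rpower_ge_1 (x a : R) : 1 <= x -> 0 <= a -> 1 <= Rpower x a.
Proof.
intros Hx Ha. rewrite <- (Rpower_O x) at 1 by lra. apply Rle_Rpower; lra.
Qed.

Lemma Rpower_pos (x a : R) : 0 < Rpower x a.
Proof. apply exp_pos. Qed.

Lemma Rpower_inv_exponent (x b : R) : 0 < x -> b <> 0 ->
  Rpower (Rpower x (1 / b)) b = x.
Proof.
intros Hx Hb. rewrite Rpower_mult.
replace (1 / b * b) with 1 by (field; exact Hb). apply Rpower_1, Hx.
Qed.

Lemma f_le_log_profile (f : R -> R) (r alpha w : R) :
  (forall s, 0 < s < 1 -> f s <= r * s / Rpower (1 + Rabs (ln s)) alpha) ->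
  f 1 = 0 -> 0 <= r -> 0 < w <= 1 ->
  f w <= r * w / Rpower (1 - ln w) alpha.
Proof.
intros Hfup Hf1 Hr Hw.
destruct (Req_dec w 1) as [-> | Hw1].
- rewrite Hf1. unfold Rdiv. apply Rmult_le_pos; [lra |].
  apply Rlt_le, Rinv_0_lt_compat, Rpower_pos.
- assert (Hlt1 : w < 1) by (destruct (proj2 Hw); [assumption | contradiction]).
  assert (Hlnw : ln w < 0).
  { rewrite <- ln_1. apply ln_increasing; lra. }
  pose proof (Hfup w (conj (proj1 Hw) Hlt1)) as Hfw.
  rewrite Rabs_left in Hfw by exact Hlnw.
  replace (1 - ln w) with (1 + - ln w) by ring. exact Hfw.
Qed.

Lemma is_derive_exp_one_sub_Rpower (B c a t : R) : 0 < B - c * t ->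
  is_derive (fun s => exp (1 - Rpower (B - c * s) a)) t
    (exp (1 - Rpower (B - c * t) a) * (a * c / (B - c * t)) * Rpower (B - c * t) a).
Proof.
intros H. unfold Rpower. auto_derive; [lra |]. unfold Rminus. field. lra.
Qed.

Section Profile.

Variables (u0 : R -> R) (alpha rho : R).
Hypothesis Halpha1 : 0 < alpha + 1.

Definition wfun_base (t x : R) : R :=
  Rpower (1 + phi0 u0 x) (alpha + 1) - rho * (alpha + 1) * t.

Lemma wfunE (t x : R) :
  wfun u0 alpha rho t x = exp (1 - Rpower (wfun_base t x) (1 / (alpha + 1))).
Proof. reflexivity. Qed.

Lemma one_sub_ln_wfun (t x : R) :
  1 - ln (wfun u0 alpha rho t x) = Rpower (wfun_base t x) (1 / (alpha + 1)).
Proof. rewrite wfunE, ln_exp. ring. Qed.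

Lemma wfun_base_ge_1 (t x : R) :
  0 <= rho * (alpha + 1) * t -> 0 < u0 x ->
  u0 x <= exp (1 - Rpower (rho * (alpha + 1) * t + 1) (1 / (alpha + 1))) ->
  1 <= wfun_base t x.
Proof.
intros Hct Hu0 Hlevel.
set (P := Rpower (rho * (alpha + 1) * t + 1) (1 / (alpha + 1))) in Hlevel.
assert (HP : 1 <= P).
{ apply Rpower_ge_1; [lra |]. apply Rlt_le, Rdiv_lt_0_compat; lra. }
assert (Hphi : P <= 1 + phi0 u0 x).
{ pose proof (ln_le _ _ Hu0 Hlevel) as Hln. rewrite ln_exp in Hln.
  unfold phi0. lra. }
assert (HPpow : Rpower P (alpha + 1) = rho * (alpha + 1) * t + 1).
{ apply Rpower_inv_exponent; lra. }
pose proof (Rle_Rpower_l P (1 + phi0 u0 x) (alpha + 1)) as Hmono.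
unfold wfun_base. lra.
Qed.

Lemma wfun_le_1 (t x : R) : 1 <= wfun_base t x -> wfun u0 alpha rho t x <= 1.
Proof.
intros Hbase.
assert (HQ : 1 <= Rpower (wfun_base t x) (1 / (alpha + 1))).
{ apply Rpower_ge_1; [exact Hbase |]. apply Rlt_le, Rdiv_lt_0_compat; lra. }
rewrite wfunE. set (Q := Rpower (wfun_base t x) (1 / (alpha + 1))) in HQ |- *.
destruct (Req_dec Q 1) as [-> | Hne].
- rewrite Rminus_eq_0, exp_0. lra.
- assert (Hlt : exp (1 - Q) < exp 0) by (apply exp_increasing; lra).
  rewrite exp_0 in Hlt. lra.
Qed.

Lemma is_derive_wfun_time (t x : R) : 0 < wfun_base t x ->
  is_derive (fun s => wfun u0 alpha rho s x) t
    (rho * wfun u0 alpha rho t x / Rpower (1 - ln (wfun u0 alpha rho t x)) alpha).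
Proof.
intros Hbase.
pose proof (is_derive_exp_one_sub_Rpower (Rpower (1 + phi0 u0 x) (alpha + 1))
  (rho * (alpha + 1)) (1 / (alpha + 1)) t Hbase) as Hd.
fold (wfun_base t x) in Hd. rewrite one_sub_ln_wfun, wfunE.
set (Q := Rpower (wfun_base t x) (1 / (alpha + 1))) in Hd |- *.
assert (HQ : wfun_base t x = Q * Rpower Q alpha).
{ rewrite <- (Rpower_1 Q) at 1 by apply Rpower_pos.
  rewrite <- Rpower_plus, Rplus_comm. symmetry. apply Rpower_inv_exponent; lra. }
replace (rho * exp (1 - Q) / Rpower Q alpha)
  with (exp (1 - Q) * (1 / (alpha + 1) * (rho * (alpha + 1)) / wfun_base t x) * Q).
- exact Hd.
- assert (0 < Q) by apply Rpower_pos. pose proof (Rpower_pos Q alpha).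
  rewrite HQ. field. split; [| split]; lra.
Qed.

End Profile.

Theorem lemma3p3
  (f f' : R -> R) (s0 K alpha r : R) (u0 : R -> R) (xi0 eps tsharp : R)
  (* hypotheses on f *)
  (Hf_C1 : C1_on (fun s => 0 <= s <= 1) f f')
  (Hf0 : f 0 = 0) (Hf1 : f 1 = 0)
  (Hfpos : forall s, 0 < s < 1 -> 0 < f s)
  (Hf'1 : f' 1 < 0)
  (Hs0 : 0 < s0 < 1) (HK : 0 <= K) (Halpha : 0 < alpha) (Hr : 0 < r)
  (Hfup : forall s, 0 < s < 1 -> f s <= r * s / Rpower (1 + Rabs (ln s)) alpha)
  (Hflow : forall s, 0 < s <= s0 ->
     r * s / Rpower (1 + Rabs (ln s)) alpha * (1 - K * s) <= f s)
  (* hypotheses on u0 *)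
  (Hu0range : forall x, 0 <= u0 x <= 1)
  (Hu0uc : unif_cont u0)
  (Hu0pos : forall x, 0 < u0 x)
  (Hu0left : exists c, 0 < c /\ exists M, forall x, x <= M -> c <= u0 x)
  (Hu0right : is_lim u0 p_infty 0)
  (Hxi0 : 0 < xi0)
  (Hu0reg : exists u1 u2 p1 p2 : R -> R,
     C2_on (fun x => xi0 <= x) u0 u1 u2 /\
     (forall x y, xi0 <= x -> x <= y -> u0 y <= u0 x) /\
     C2_on (fun x => xi0 <= x) (phi0 u0) p1 p2 /\
     (forall e, 0 < e -> exists M, forall x, M <= x ->
        Rabs (p1 x) <= e * Rabs (Rpower (phi0 u0 x) (- alpha))) /\
     (forall e, 0 < e -> exists M, forall x, M <= x ->
        Rabs (p2 x) <= e * Rabs (p1 x)))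
  (Heps : 0 < eps)
  (* the time t# *)
  (Htsharp : 0 < tsharp)
  (Hw : forall t x : R, tsharp <= t -> Rbar_le (x0fun u0 alpha (r + eps / 2) t) (Finite x) ->
     ex_derive_n (fun z => wfun u0 alpha (r + eps / 2) t z) 2 x /\
     Rabs (Derive_n (fun z => wfun u0 alpha (r + eps / 2) t z) 2 x) <
       eps / 2 * wfun u0 alpha (r + eps / 2) t x
         / Rpower (1 - ln (wfun u0 alpha (r + eps / 2) t x)) alpha) :
  forall t x : R, 0 < t ->
    (* region x < x0(t+t#), where m = 1 *)
    (Rbar_lt (Finite x) (x0fun u0 alpha (r + eps / 2) (t + tsharp)) ->
       Derive (fun _ : R => 1) t - Derive_n (fun _ : R => 1) 2 x - f 1 >= 0) /\
    (* region x >= x0(t+t#), where m(t,x) = w(t+t#,x) *)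
    (Rbar_le (x0fun u0 alpha (r + eps / 2) (t + tsharp)) (Finite x) ->
       Derive (fun s => wfun u0 alpha (r + eps / 2) (s + tsharp) x) t
       - Derive_n (fun z => wfun u0 alpha (r + eps / 2) (t + tsharp) z) 2 x
       - f (wfun u0 alpha (r + eps / 2) (t + tsharp) x) >= 0).
Proof.
intros t x Ht. split.
{ intros _. rewrite Derive_const, Derive_n_const, Hf1. lra. }
intros Hx0.
set (rho := r + eps / 2) in *.
set (T := t + tsharp) in *.
set (w := wfun u0 alpha rho T x).
assert (Halpha1 : 0 < alpha + 1) by lra.
assert (HcT : 0 <= rho * (alpha + 1) * T).
{ unfold rho, T. apply Rmult_le_pos; [apply Rmult_le_pos |]; lra. }
assert (Hlevel := le_level_of_Lub_level_set_le u0 _ x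
  (continuity_of_unif_cont u0 Hu0uc) Hu0right (exp_pos _) Hx0).
assert (Hbase := wfun_base_ge_1 u0 alpha rho Halpha1 T x HcT (Hu0pos x) Hlevel).
assert (Hder : Derive (fun s => wfun u0 alpha rho (s + tsharp) x) t
               = rho * w / Rpower (1 - ln w) alpha).
{ apply is_derive_unique.
  pose proof (is_derive_wfun_time u0 alpha rho Halpha1 T x ltac:(lra)) as Hd.
  assert (Hshift : is_derive (fun s => s + tsharp) t 1) by (auto_derive; [exact I | ring]).
  pose proof (is_derive_comp (fun s => wfun u0 alpha rho s x) (fun s => s + tsharp)
    t _ _ Hd Hshift) as Hcomp.
  rewrite (scal_one (V := R_NormedModule)) in Hcomp. exact Hcomp. }
assert (Hfw := f_le_log_profile f r alpha w Hfup Hf1 (Rlt_le _ _ Hr)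
  (conj (exp_pos _) (wfun_le_1 u0 alpha rho Halpha1 T x Hbase))).
destruct (Hw T x ltac:(unfold T; lra) Hx0) as [_ Hwxx].
fold w in Hwxx |- *. rewrite Hder.
pose proof (Rle_abs (Derive_n (fun z => wfun u0 alpha rho T z) 2 x)).
assert (Hsplit : rho * w / Rpower (1 - ln w) alpha
                 = eps / 2 * w / Rpower (1 - ln w) alpha + r * w / Rpower (1 - ln w) alpha).
{ pose proof (Rpower_pos (1 - ln w) alpha). unfold rho. field. lra. }
lra.
Qed.
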